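(* Let $A=\mathrm{Diag}(a_1,a_2,a_3,a_4)$, $B=\mathrm{Diag}(b_1,b_2,b_3,b_4)$, $C=\mathrm{Diag}(c_1,c_2,c_3,c_4)$ be traceless real diagonal matrices. Then for the $G_2$-structure $(G_{A,B,C},\varphi)$, with $\psi=*\varphi$, $$\Delta\varphi=\big((a_1+a_2)^2+(b_1+b_2)^2+(c_1+c_2)^2\big)\omega_7\wedge e^7+\big((a_1+a_3)^2+(b_1+b_3)^2+(c_1+c_3)^2\big)\omega_1\wedge e^1+\big((a_1+a_4)^2+(b_1+b_4)^2+(c_1+c_4)^2\big)\omega_2\wedge e^2,$$ $$\Delta\psi=\big((a_1+a_2)^2+(b_1+b_2)^2+(c_1+c_2)^2\big)\omega_7\wedge e^{12}+\big((a_1+a_3)^2+(b_1+b_3)^2+(c_1+c_3)^2\big)\omega_1\wedge e^{27}-\big((a_1+a_4)^2+(b_1+b_4)^2+(c_1+c_4)^2\big)\omega_2\wedge e^{17}.$$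
   Context: For commuting $A,B,C\in\mathfrak{sl}_4(\mathbb R)$, $\mathfrak g_{A,B,C}$ is the Lie algebra with basis $\{e_1,\dots,e_7\}$ in which $\langle e_7,e_1,e_2\rangle$ is an abelian subalgebra, $\mathfrak n=\langle e_3,\dots,e_6\rangle$ is an abelian ideal, and in the basis $\{e_3,\dots,e_6\}$, $\mathrm{ad}\,e_7|_{\mathfrak n}=A$, $\mathrm{ad}\,e_1|_{\mathfrak n}=B$, $\mathrm{ad}\,e_2|_{\mathfrak n}=C$; $G_{A,B,C}$ is the simply connected Lie group with this Lie algebra, with left-invariant positive 3-form $\varphi=e^{127}+e^{347}+e^{567}+e^{135}-e^{146}-e^{236}-e^{245}$ ($\{e^i\}$ dual basis, $e^{ij}=e^i\wedge e^j$). The induced metric makes $\{e_1,\dots,e_7\}$ oriented orthonormal; $*$ is its Hodge star and $\Delta=dd^*+d^*d$ the Hodge Laplacian on left-invariant forms. Also $\omega_7=e^{34}+e^{56}$, $\omega_1=e^{35}-e^{46}$, $\omega_2=-e^{36}-e^{45}$. *)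

(* Left-invariant forms on the 7-dimensional Lie group
   G_{A,B,C}, represented by their coefficients in the dual basis e^1..e^7.
   Paper index n (1..7) corresponds to the ordinal n-1 : 'I_7. *)
From HB Require Import structures.
From mathcomp Require Import all_boot all_order all_algebra.
Set Implicit Arguments. Unset Strict Implicit. Unset Printing Implicit Defensive.
Import Order.TTheory GRing.Theory Num.Theory.
Local Open Scope ring_scope.

Notation form R := {ffun {set 'I_7} -> R} (only parsing).

Section Forms.
Variable R : realFieldType.

Definition shsign (I J : {set 'I_7}) : R :=
  (-1) ^+ #|[set p : 'I_7 * 'I_7 | (p.1 \in I) && (p.2 \in J) && (p.2 < p.1)%N]|.

Definition eb (n : nat) : form R := [ffun S : {set 'I_7} => ((S == [set (inord n.-1 : 'I_7)]) : nat)%:R].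

Definition wedge (a b : form R) : form R :=
  [ffun S : {set 'I_7} => \sum_(I : {set 'I_7} | I \subset S) shsign I (S :\: I) * a I * b (S :\: I)].

(* Hodge star of the metric making e_1..e_7 oriented orthonormal:
   * e^I = shsign I I^c e^{I^c} *)
Definition hodge (a : form R) : form R := [ffun J : {set 'I_7} => shsign (~: J) J * a (~: J)].

Fixpoint inversions (s : seq 'I_7) : nat :=
  if s is x :: t then (count (fun y : 'I_7 => (y < x)%N) t + inversions t)%N else 0%N.

(* alpha(e_{s_0}, ..., e_{s_p}) for a sequence of basis vectors *)
Definition evalf (a : form R) (s : seq 'I_7) : R :=
  if uniq s then (-1) ^+ inversions s * a [set x in s] else 0.

Definition drop2 (s : seq 'I_7) (i j : nat) : seq 'I_7 :=
  [seq nth ord0 s k | k <- iota 0 (size s) & (k != i) && (k != j)].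

(* exterior derivative of left-invariant forms for a Lie algebra with
   structure constants c: [e_a, e_b] = sum_k c k a b e_k, via
   d alpha (X_0..X_p) = sum_{i<j} (-1)^{i+j} alpha([X_i,X_j], X_0,..^i..^j..,X_p) *)
Definition dext (c : 'I_7 -> 'I_7 -> 'I_7 -> R) (a : form R) : form R :=
  [ffun S : {set 'I_7} => let s := enum S in
     \sum_(i < #|S|) \sum_(j < #|S| | (i < j)%N)
        (-1) ^+ (i + j) *
        \sum_(k : 'I_7) c k (nth ord0 s i) (nth ord0 s j) * evalf a (k :: drop2 s i j)].

(* codifferential: on k-forms in dimension 7, d^* = (-1)^k * d * *)
Definition dstar c (a : form R) : form R :=
  [ffun J : {set 'I_7} => (-1) ^+ (#|J| + 1) * hodge (dext c (hodge a)) J].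

Definition laplacian c (a : form R) : form R := dext c (dstar c a) + dstar c (dext c a).

(* the Lie algebra g_{A,B,C}: ad e_7, ad e_1, ad e_2 act on n = <e_3..e_6>
   by A, B, C (columns = images of e_3..e_6); all other brackets of basis
   elements vanish. *)
Definition nidx (i : 'I_7) : option 'I_4 :=
  if (2 <= i <= 5)%N then Some (inord (i - 2)) else None.

Definition admat (A B C : 'M[R]_4) (i : 'I_7) : option 'M[R]_4 :=
  if val i == 6%N then Some A else if val i == 0%N then Some B
  else if val i == 1%N then Some C else None.

Definition structc (A B C : 'M[R]_4) (k a b : 'I_7) : R :=
  match admat A B C a, nidx b, nidx k with
  | Some M, Some j, Some i => M i j
  | _, _, _ =>
    match admat A B C b, nidx a, nidx k with
    | Some M, Some j, Some i => - M i j
    | _, _, _ => 0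
    end
  end.

Definition fscale (k : R) (f : form R) : form R := [ffun S : {set 'I_7} => k * f S].

Definition w2 (i j : nat) : form R := wedge (eb i) (eb j).
Definition w3 (i j k : nat) : form R := wedge (eb i) (wedge (eb j) (eb k)).

Definition G2phi : form R :=
  w3 1 2 7 + w3 3 4 7 + w3 5 6 7 + w3 1 3 5 - w3 1 4 6 - w3 2 3 6 - w3 2 4 5.
Definition G2psi : form R := hodge G2phi.

Definition omega7 : form R := w2 3 4 + w2 5 6.
Definition omega1 : form R := w2 3 5 - w2 4 6.
Definition omega2 : form R := - w2 3 6 - w2 4 5.

End Forms.

(* Once the trace conditions eliminate the fourth diagonal entries, every coefficient of
   both sides is a polynomial with integer coefficients in the nine remaining entries of
   A, B, C.  Representing forms by tables of such polynomials, each operator (wedge, Hodge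
   star, d, codifferential) has a symbolic counterpart commuting with evaluation, and the
   two identities reduce to polynomial identities checked by computation. *)

From mathcomp Require Import all_boot all_order all_algebra.
Set Implicit Arguments. Unset Strict Implicit. Unset Printing Implicit Defensive.
Import Order.TTheory GRing.Theory Num.Theory.
Local Open Scope ring_scope.

(** * Sparse integer polynomials *)

(* A monomial is the sorted list of its variables, with repetitions.  Soundness only uses
   that [ieval] is a ring morphism; keeping terms sorted by [monom_lt] and dropping zero
   coefficients is what makes [== [::]] recognise the zero polynomial in the final checks. *)
Definition monom := seq nat.
Definition ipoly := seq (monom * int).

Fixpoint monom_lt (m1 m2 : monom) : bool :=
  match m1, m2 with
  | [::], [::] => false
  | [::], _ => true
  | _, [::] => false
  | i :: m1', j :: m2' => (i < j)%N || (i == j) && monom_lt m1' m2'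
  end.

Fixpoint ipoly_insert (t : monom * int) (p : ipoly) : ipoly :=
  match p with
  | [::] => if t.2 == 0 then [::] else [:: t]
  | u :: p' =>
    if t.1 == u.1 then (if t.2 + u.2 == 0 then p' else (t.1, t.2 + u.2) :: p')
    else if monom_lt t.1 u.1 then (if t.2 == 0 then p else t :: p)
    else u :: ipoly_insert t p'
  end.

Definition ipoly_add (p q : ipoly) : ipoly := foldr ipoly_insert q p.
Definition ipoly_opp (p : ipoly) : ipoly := [seq (t.1, - t.2) | t <- p].
Definition ipoly_mul (p q : ipoly) : ipoly :=
  foldr (fun t r => foldr (fun u r' => ipoly_insert (sort leq (t.1 ++ u.1), t.2 * u.2) r') r q)
    [::] p.
Definition ipoly1 : ipoly := [:: ([::], 1)].
Definition ipolyX (i : nat) : ipoly := [:: ([:: i], 1)].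
Definition ipoly_sign (n : nat) (p : ipoly) : ipoly := if odd n then ipoly_opp p else p.
Definition ipoly_sum (A : Type) (s : seq A) (F : A -> ipoly) : ipoly :=
  foldr (fun y r => ipoly_add (F y) r) [::] s.

Section IpolyEval.
Variables (R : comNzRingType) (x : nat -> R).

Definition ieval_term (t : monom * int) : R := t.2%:~R * \prod_(i <- t.1) x i.
Definition ieval (p : ipoly) : R := \sum_(t <- p) ieval_term t.

Lemma ieval_nil : ieval [::] = 0.
Proof. exact: big_nil. Qed.

Lemma ieval_cons t p : ieval (t :: p) = ieval_term t + ieval p.
Proof. by rewrite /ieval big_cons. Qed.

Lemma ieval_insert t p : ieval (ipoly_insert t p) = ieval_term t + ieval p.
Proof.
have term0 m : ieval_term (m, 0) = 0 by rewrite /ieval_term mul0r.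
case: t => m k; elim: p => [|[m' k'] p IHp] /=.
  by have [->|_] := eqVneq k 0; rewrite ?term0 ?ieval_cons ieval_nil ?addr0.
have [<-|_] := eqVneq m m'.
  have termD : ieval_term (m, k) + ieval_term (m, k') = ieval_term (m, k + k').
    by rewrite /ieval_term intrD mulrDl.
  rewrite !ieval_cons addrA termD.
  by have [->|_] := eqVneq (k + k') 0; rewrite ?term0 ?add0r ?ieval_cons.
case: ifP => _; last by rewrite !ieval_cons IHp addrCA.
by have [->|_] := eqVneq k 0; rewrite ?term0 ?add0r ?ieval_cons.
Qed.

Lemma ievalD p q : ieval (ipoly_add p q) = ieval p + ieval q.
Proof.
elim: p => [|t p IHp] /=; first by rewrite ieval_nil add0r.
by rewrite ieval_insert IHp ieval_cons addrA.
Qed.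

Lemma ievalN p : ieval (ipoly_opp p) = - ieval p.
Proof.
rewrite /ieval big_map -sumrN; apply: eq_bigr => t _.
by rewrite /ieval_term intrN mulNr.
Qed.

Lemma ieval_mul_term t q r :
  ieval (foldr (fun u r' => ipoly_insert (sort leq (t.1 ++ u.1), t.2 * u.2) r') r q)
  = ieval_term t * ieval q + ieval r.
Proof.
elim: q => [|u q IHq] /=; first by rewrite ieval_nil mulr0 add0r.
rewrite ieval_insert IHq ieval_cons mulrDr addrA; congr (_ + _ + _).
rewrite /ieval_term /= intrM (perm_big _ (permEl (perm_sort _ _))) big_cat /=.
by rewrite mulrACA.
Qed.

Lemma ievalM p q : ieval (ipoly_mul p q) = ieval p * ieval q.
Proof.
elim: p => [|t p IHp] /=; first by rewrite ieval_nil mul0r.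
by rewrite ieval_mul_term IHp ieval_cons mulrDl.
Qed.

Lemma ieval1 : ieval ipoly1 = 1.
Proof. by rewrite /ieval big_seq1 /ieval_term big_nil mulr1. Qed.

Lemma ievalX i : ieval (ipolyX i) = x i.
Proof. by rewrite /ieval big_seq1 /ieval_term big_seq1 mul1r. Qed.

Lemma ieval_sign n p : ieval (ipoly_sign n p) = (-1) ^+ n * ieval p.
Proof. by rewrite /ipoly_sign -signr_odd; case: odd; rewrite ?ievalN ?mulN1r ?mul1r. Qed.

Lemma ieval_sum (A : Type) (s : seq A) (F : A -> ipoly) :
  ieval (ipoly_sum s F) = \sum_(y <- s) ieval (F y).
Proof.
elim: s => [|y s IHs] /=; first by rewrite ieval_nil big_nil.
by rewrite ievalD IHs big_cons.
Qed.

End IpolyEval.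

(** * Bit-vector encoding of subsets of ['I_n] *)

Inductive trie (T : Type) := TLeaf of T | TNode of trie T & trie T.

Fixpoint trie_build (T : Type) (d : nat) (f : seq bool -> T) : trie T :=
  if d is d'.+1 then
    TNode (trie_build d' (fun bs => f (false :: bs))) (trie_build d' (fun bs => f (true :: bs)))
  else TLeaf (f [::]).

Fixpoint trie_get (T : Type) (t : trie T) (bs : seq bool) (dflt : T) : T :=
  match t, bs with
  | TLeaf v, _ => v
  | TNode l r, b :: bs' => trie_get (if b then r else l) bs' dflt
  | TNode _ _, [::] => dflt
  end.

Lemma trie_get_build (T : Type) d (f : seq bool -> T) bs dflt :
  size bs = d -> trie_get (trie_build d f) bs dflt = f bs.
Proof. by elim: d f bs => [|d IHd] f [|[] bs] //= [/IHd]. Qed.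

Section BitVectors.
Variable n : nat.
Implicit Types (S I J : {set 'I_n}) (bs cs : seq bool).

Definition bits (S : {set 'I_n}) : seq bool := [seq i \in S | i <- enum 'I_n].
Definition set_of_bits (bs : seq bool) : {set 'I_n} := [set i : 'I_n | nth false bs i].

Definition bits_compl (bs : seq bool) := mkseq (fun i => ~~ nth false bs i) n.
Definition bits_diff (bs cs : seq bool) := mkseq (fun i => nth false bs i && ~~ nth false cs i) n.
Definition bits_subset (bs cs : seq bool) :=
  all (fun i => nth false bs i ==> nth false cs i) (iota 0 n).
Definition bits_of_seq (s : seq nat) := mkseq (fun i => i \in s) n.
Definition bits_elems (bs : seq bool) := [seq i <- iota 0 n | nth false bs i].
Definition bits_inversions (bs cs : seq bool) :=
  count (fun p => nth false bs p.1 && nth false cs p.2 && (p.2 < p.1)%N)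
    [seq (i, j) | i <- iota 0 n, j <- iota 0 n].

Fixpoint all_bits (d : nat) : seq (seq bool) :=
  if d is d'.+1 then [seq b :: bs | b <- [:: false; true], bs <- all_bits d'] else [:: [::]].

Lemma size_bits S : size (bits S) = n.
Proof. by rewrite size_map size_enum_ord. Qed.

Lemma nth_bits S (i : 'I_n) : nth false (bits S) i = (i \in S).
Proof. by rewrite (nth_map i) ?size_enum_ord // nth_ord_enum. Qed.

Lemma bitsK : cancel bits set_of_bits.
Proof. by move=> S; apply/setP => i; rewrite inE nth_bits. Qed.

Lemma bits_inj : injective bits.
Proof. exact: can_inj bitsK. Qed.

Lemma set_of_bitsK bs : size bs = n -> bits (set_of_bits bs) = bs.
Proof.
move=> sz_bs; apply: (@eq_from_nth _ false); rewrite size_bits // => i lt_i_n.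
by rewrite -[i]/(val (Ordinal lt_i_n)) nth_bits inE.
Qed.

Lemma bits_mkseq S (f : nat -> bool) : (forall i : 'I_n, (i \in S) = f i) -> bits S = mkseq f n.
Proof. by move=> Sf; rewrite /mkseq -val_enum_ord -map_comp; apply: eq_map. Qed.

Lemma bits_setC S : bits (~: S) = bits_compl (bits S).
Proof. by apply: bits_mkseq => i; rewrite inE nth_bits. Qed.

Lemma bits_setD S I : bits (S :\: I) = bits_diff (bits S) (bits I).
Proof. by apply: bits_mkseq => i; rewrite !inE !nth_bits andbC. Qed.

Lemma bits_set_seq (s : seq 'I_n) : bits [set i in s] = bits_of_seq (map val s).
Proof. by apply: bits_mkseq => i; rewrite inE (mem_map val_inj). Qed.

Lemma subset_bits I S : (I \subset S) = bits_subset (bits I) (bits S).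
Proof.
rewrite /bits_subset -val_enum_ord all_map; apply/subsetP/allP => /= IS i.
  by move=> _; rewrite !nth_bits; apply/implyP/IS.
by move=> Ii; have /implyP := IS i (mem_enum _ i); rewrite !nth_bits; apply.
Qed.

Lemma enum_set_filter S : enum S = [seq i <- enum 'I_n | i \in S].
Proof. by rewrite [in RHS]enumT. Qed.

Lemma bits_elemsE S : bits_elems (bits S) = map val (enum S).
Proof.
rewrite /bits_elems -val_enum_ord filter_map enum_set_filter.
by congr map; apply: eq_filter => i; rewrite /= nth_bits.
Qed.

Lemma card_bits S : #|S| = count id (bits S).
Proof. by rewrite cardE /enum_mem size_filter count_map -enumT. Qed.

Lemma card_inversion_pairs I J :
  #|[set p : 'I_n * 'I_n | (p.1 \in I) && (p.2 \in J) && (p.2 < p.1)%N]|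
  = bits_inversions (bits I) (bits J).
Proof.
have enum_pairs : Finite.enum {: 'I_n * 'I_n} = prod_enum 'I_n 'I_n by rewrite unlock.
rewrite cardsE cardE /enum_mem size_filter enum_pairs /prod_enum.
rewrite /bits_inversions -val_enum_ord allpairs_mapl allpairs_mapr.
rewrite -(map_allpairs (fun p : 'I_n * 'I_n => (val p.1, val p.2)) pair) count_map.
by apply: eq_count => -[i j]; rewrite /= !nth_bits.
Qed.

Lemma mem_all_bits d bs : (bs \in all_bits d) = (size bs == d).
Proof.
elim: d bs => [|d IHd] bs; first by case: bs.
apply/allpairsP/idP => [[[b cs] [_ /=]]|].
  by rewrite IHd => /eqP <- ->.
case: bs => [|b bs] //=; rewrite eqSS -IHd => bs_d.
by exists (b, bs); case: b.
Qed.

Lemma bits_in_all_bits S : bits S \in all_bits n.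
Proof. by rewrite mem_all_bits size_bits. Qed.

Lemma uniq_all_bits d : uniq (all_bits d).
Proof.
elim: d => // d IHd; apply: allpairs_uniq => //.
by move=> [b1 bs1] [b2 bs2] _ _ /= [-> ->].
Qed.

Lemma big_set_bits (R : Type) (idx : R) (op : Monoid.com_law idx) (P : pred {set 'I_n}) F :
  \big[op/idx]_(I | P I) F I
  = \big[op/idx]_(bs <- all_bits n | P (set_of_bits bs)) F (set_of_bits bs).
Proof.
rewrite -(big_map set_of_bits P F) [RHS]big_mkcond [RHS]big_uniq ?big_mkcond //.
  apply: eq_bigl => I; apply/esym/mapP.
  by exists (bits I); rewrite ?bits_in_all_bits ?bitsK.
rewrite map_inj_in_uniq ?uniq_all_bits // => bs cs.
by rewrite !mem_all_bits => /eqP/set_of_bitsK {2}<- /eqP/set_of_bitsK {2}<- ->.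
Qed.

End BitVectors.

(** * Symbolic left-invariant forms *)

Fixpoint nat_inversions (s : seq nat) : nat :=
  if s is i :: s' then (count (fun j => (j < i)%N) s' + nat_inversions s')%N else 0%N.

Definition nat_drop2 (s : seq nat) (i j : nat) : seq nat :=
  [seq nth 0%N s k | k <- iota 0 (size s) & (k != i) && (k != j)].

Lemma inversions_val (s : seq 'I_7) : inversions s = nat_inversions (map val s).
Proof. by elim: s => //= i s ->; rewrite count_map. Qed.

Lemma map_drop2 (s : seq 'I_7) i j : map val (drop2 s i j) = nat_drop2 (map val s) i j.
Proof.
rewrite /drop2 /nat_drop2 size_map -map_comp; apply/eq_in_map => k.
by rewrite mem_filter mem_iota => /andP[_ /andP[_ lt_k]] /=; rewrite (nth_map ord0).
Qed.

Definition sform := trie ipoly.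
Definition sform_of (f : seq bool -> ipoly) : sform := trie_build 7 f.
Definition sform_at (t : sform) (bs : seq bool) : ipoly := trie_get t bs [::].

Definition sform_add (t u : sform) :=
  sform_of (fun bs => ipoly_add (sform_at t bs) (sform_at u bs)).
Definition sform_opp (t : sform) := sform_of (fun bs => ipoly_opp (sform_at t bs)).
Definition sform_sub (t u : sform) := sform_add t (sform_opp u).
Definition sform_scale (p : ipoly) (t : sform) := sform_of (fun bs => ipoly_mul p (sform_at t bs)).
Definition sform_basis (k : nat) :=
  sform_of (fun bs => if bs == bits_of_seq 7 [:: k.-1] then ipoly1 else [::]).

Definition sform_hodge (t : sform) := sform_of (fun bs =>
  let cs := bits_compl 7 bs in ipoly_sign (bits_inversions 7 cs bs) (sform_at t cs)).

Definition sform_wedge (t u : sform) := sform_of (fun bs =>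
  ipoly_sum [seq cs <- all_bits 7 | bits_subset 7 cs bs] (fun cs =>
    let ds := bits_diff 7 bs cs in
    ipoly_sign (bits_inversions 7 cs ds) (ipoly_mul (sform_at t cs) (sform_at u ds)))).

Definition sform_evalf (t : sform) (s : seq nat) : ipoly :=
  if uniq s then ipoly_sign (nat_inversions s) (sform_at t (bits_of_seq 7 s)) else [::].

(* [index_iota] rather than [iota], so that [big_mkord] turns these sums into those of [dext]. *)
Definition sform_d_coef (sc : nat -> nat -> nat -> ipoly) (t : sform) (s : seq nat) :=
  ipoly_sum (index_iota 0 (size s)) (fun i =>
  ipoly_sum [seq j <- index_iota 0 (size s) | (i < j)%N] (fun j =>
  ipoly_sign (i + j) (ipoly_sum (index_iota 0 7) (fun k =>
    ipoly_mul (sc k (nth 0%N s i) (nth 0%N s j)) (sform_evalf t (k :: nat_drop2 s i j)))))).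

Definition sform_d sc (t : sform) := sform_of (fun bs => sform_d_coef sc t (bits_elems 7 bs)).

Definition sform_dstar sc (t : sform) :=
  let u := sform_hodge (sform_d sc (sform_hodge t)) in
  sform_of (fun bs => ipoly_sign (count id bs + 1) (sform_at u bs)).

Definition sform_laplacian sc (t : sform) :=
  sform_add (sform_d sc (sform_dstar sc t)) (sform_dstar sc (sform_d sc t)).

Definition sform_eqb (t u : sform) :=
  all (fun bs => ipoly_add (sform_at t bs) (ipoly_opp (sform_at u bs)) == [::]) (all_bits 7).

Section Represents.
Variables (R : realFieldType) (x : nat -> R).
Implicit Types (t u : sform) (a b : {ffun {set 'I_7} -> R}) (S I J : {set 'I_7}).

Definition represents t a := forall S, a S = ieval x (sform_at t (bits S)).

Lemma sform_at_bits f S : sform_at (sform_of f) (bits S) = f (bits S).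
Proof. exact/trie_get_build/size_bits. Qed.

Lemma represents_eq t u a b : sform_eqb t u -> represents t a -> represents u b -> a = b.
Proof.
move=> /allP tu ta ub; apply/ffunP => S; rewrite ta ub; apply/eqP; rewrite -subr_eq0.
have /eqP/(congr1 (ieval x)) := tu _ (bits_in_all_bits S).
by rewrite ievalD ievalN ieval_nil => ->.
Qed.

Lemma represents_add t u a b :
  represents t a -> represents u b -> represents (sform_add t u) (a + b).
Proof. by move=> ta ub S; rewrite sform_at_bits ievalD -ta -ub ffunE. Qed.

Lemma represents_opp t a : represents t a -> represents (sform_opp t) (- a).
Proof. by move=> ta S; rewrite sform_at_bits ievalN -ta ffunE. Qed.

Lemma represents_sub t u a b :
  represents t a -> represents u b -> represents (sform_sub t u) (a - b).
Proof. by move=> ta ub; apply/represents_add/represents_opp. Qed.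

Lemma represents_scale p t k a :
  k = ieval x p -> represents t a -> represents (sform_scale p t) (fscale k a).
Proof. by move=> -> ta S; rewrite sform_at_bits ievalM -ta ffunE. Qed.

Lemma represents_basis k : (0 < k <= 7)%N -> represents (sform_basis k) (eb R k).
Proof.
case/andP=> k_gt0 k_le7 S; rewrite sform_at_bits ffunE.
have -> : bits_of_seq 7 [:: k.-1] = bits [set inord k.-1 : 'I_7].
  by apply/esym/bits_mkseq => i; rewrite !inE -(inj_eq val_inj) /= inordK ?prednK.
by rewrite (inj_eq (@bits_inj 7)); case: eqP; rewrite ?ieval1 ?ieval_nil.
Qed.

Lemma shsign_bits I J : shsign R I J = (-1) ^+ bits_inversions 7 (bits I) (bits J).
Proof. by rewrite /shsign card_inversion_pairs. Qed.

Lemma represents_hodge t a : represents t a -> represents (sform_hodge t) (hodge a).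
Proof. by move=> ta S; rewrite sform_at_bits ffunE /= ieval_sign shsign_bits ta bits_setC. Qed.

Lemma represents_wedge t u a b : represents t a -> represents u b ->
  represents (sform_wedge t u) (wedge a b).
Proof.
move=> ta ub S; rewrite sform_at_bits ffunE ieval_sum big_filter big_set_bits.
rewrite big_seq_cond [RHS]big_seq_cond; apply: eq_big => [bs|bs /andP[]].
  apply: andb_id2l; rewrite mem_all_bits => /eqP/set_of_bitsK bsK.
  by rewrite subset_bits bsK.
rewrite mem_all_bits => /eqP/set_of_bitsK bsK _.
by rewrite ieval_sign ievalM shsign_bits ta ub bits_setD bsK mulrA.
Qed.

Lemma evalfE t a (s : seq 'I_7) : represents t a -> evalf a s = ieval x (sform_evalf t (map val s)).
Proof.
move=> ta; rewrite /evalf /sform_evalf (map_inj_uniq val_inj) inversions_val.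
by case: ifP => _; rewrite ?ieval_sign ?ta ?bits_set_seq ?ieval_nil.
Qed.

Lemma represents_scale_wedge p k t u a b : k = ieval x p -> represents t a -> represents u b ->
  represents (sform_scale p (sform_wedge t u)) (fscale k (wedge a b)).
Proof. by move=> kE ta ub; apply/(represents_scale kE)/represents_wedge. Qed.

Section Derivative.
Variables (c : 'I_7 -> 'I_7 -> 'I_7 -> R) (sc : nat -> nat -> nat -> ipoly).
Hypothesis scE : forall k p q : 'I_7, c k p q = ieval x (sc k p q).

Lemma represents_d t a : represents t a -> represents (sform_d sc t) (dext c a).
Proof.
move=> ta S; rewrite sform_at_bits ffunE bits_elemsE /sform_d_coef cardE size_map.
rewrite ieval_sum big_mkord; apply: eq_bigr => i _.
rewrite ieval_sum big_filter big_mkord; apply: eq_bigr => j _.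
rewrite ieval_sign ieval_sum big_mkord; congr (_ * _); apply: eq_bigr => k _.
rewrite ievalM scE (evalfE (k :: drop2 _ i j) ta) /= map_drop2.
by rewrite !(nth_map ord0) // -cardE.
Qed.

Lemma represents_dstar t a : represents t a -> represents (sform_dstar sc t) (dstar c a).
Proof.
move=> ta S; rewrite sform_at_bits ffunE ieval_sign card_bits.
by rewrite (represents_hodge (represents_d (represents_hodge ta))).
Qed.

Lemma represents_laplacian t a :
  represents t a -> represents (sform_laplacian sc t) (laplacian c a).
Proof.
move=> ta; apply: represents_add; first exact/represents_d/represents_dstar.
exact/represents_dstar/represents_d.
Qed.

End Derivative.

End Represents.

(** * The Lie algebra of diagonal traceless A, B, C *)

Lemma diag_last_entry_trace0 (R : comNzRingType) (v : 'rV[R]_4) : \tr (diag_mx v) = 0 ->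
  v 0 (inord 3) = - (v 0 (inord 0) + v 0 (inord 1) + v 0 (inord 2)).
Proof.
rewrite mxtrace_diag !big_ord_recr big_ord0 /= add0r => /eqP.
rewrite addrC addr_eq0 => /eqP v3.
have -> : (inord 3 : 'I_4) = ord_max by apply: val_inj; rewrite /= inordK.
by rewrite v3; congr (- (v 0 _ + v 0 _ + v 0 _)); apply: val_inj; rewrite /= inordK.
Qed.

(* Variable [3 * m + i] stands for the entry [i] (for [i < 3]) of the [m]-th of A, B, C. *)
Definition sdiag_entry (m i : nat) : ipoly :=
  if (i < 3)%N then ipolyX (3 * m + i)
  else ipoly_opp (ipoly_add (ipoly_add (ipolyX (3 * m)) (ipolyX (3 * m + 1))) (ipolyX (3 * m + 2))).

Definition ad_index (p : nat) : option nat :=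
  if p == 6%N then Some 0%N else if p == 0%N then Some 1%N else if p == 1%N then Some 2%N else None.

Definition n_index (i : nat) : option nat := if (2 <= i <= 5)%N then Some (i - 2)%N else None.

Definition sstructc (k p q : nat) : ipoly :=
  match ad_index p, n_index q, n_index k with
  | Some m, Some j, Some i => if i == j then sdiag_entry m i else [::]
  | _, _, _ =>
    match ad_index q, n_index p, n_index k with
    | Some m, Some j, Some i => if i == j then ipoly_opp (sdiag_entry m i) else [::]
    | _, _, _ => [::]
    end
  end.

Definition slambda (n : nat) : ipoly :=
  let sq m := let e := ipoly_add (sdiag_entry m 0) (sdiag_entry m n) in ipoly_mul e e in
  ipoly_add (ipoly_add (sq 0%N) (sq 1%N)) (sq 2%N).

Section DiagonalValuation.
Variables (R : realFieldType) (a b c : 'rV[R]_4).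
Hypotheses (tra : \tr (diag_mx a) = 0) (trb : \tr (diag_mx b) = 0) (trc : \tr (diag_mx c) = 0).

Definition diag_row (m : nat) : 'rV[R]_4 := nth a [:: a; b; c] m.
Definition diag_val (v : nat) : R := diag_row (v %/ 3) 0 (inord (v %% 3)).

Lemma ieval_sdiag_entry m i : (m < 3)%N -> (i < 4)%N ->
  ieval diag_val (sdiag_entry m i) = diag_row m 0 (inord i).
Proof.
move=> lt_m3 lt_i4.
have tr_m : \tr (diag_mx (diag_row m)) = 0 by case: m lt_m3 => [|[|[]]].
have valE j : (j < 3)%N -> diag_val (3 * m + j) = diag_row m 0 (inord j).
  by move=> lt_j3; rewrite /diag_val mulnC divnMDl // modnMDl divn_small ?modn_small ?addn0.
rewrite /sdiag_entry; case: ifPn => [lt_i3|]; first by rewrite ievalX valE.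
rewrite -leqNgt => ge_i3; have -> : i = 3%N by apply/eqP; rewrite eqn_leq ge_i3 -ltnS lt_i4.
have val0 : diag_val (3 * m) = diag_row m 0 (inord 0) by rewrite -valE ?addn0.
by rewrite ievalN !ievalD !ievalX val0 !valE // diag_last_entry_trace0.
Qed.

Lemma ad_index_lt p m : ad_index p = Some m -> (m < 3)%N.
Proof. by rewrite /ad_index; (repeat case: ifP => _) => //; case=> <-. Qed.

Lemma n_index_lt i j : n_index i = Some j -> (j < 4)%N.
Proof. by rewrite /n_index; case: ifP => // /andP[le2i le_i5] [<-]; rewrite ltn_subLR. Qed.

Lemma admat_diag (p : 'I_7) :
  admat (diag_mx a) (diag_mx b) (diag_mx c) p = omap (fun m => diag_mx (diag_row m)) (ad_index p).
Proof. by rewrite /admat /ad_index; case: ifP => //; case: ifP => //; case: ifP. Qed.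

Lemma nidx_n_index (i : 'I_7) : nidx i = omap inord (n_index i).
Proof. by rewrite /nidx /n_index; case: ifP. Qed.

Lemma diag_mx_entry m i j : (m < 3)%N -> (i < 4)%N -> (j < 4)%N ->
  diag_mx (diag_row m) (inord i) (inord j)
  = ieval diag_val (if i == j then sdiag_entry m i else [::]).
Proof.
move=> lt_m3 lt_i4 lt_j4; rewrite mxE -(inj_eq val_inj) /= !inordK //.
by case: eqP => _; rewrite ?mulr1n ?ieval_sdiag_entry ?mulr0n ?ieval_nil.
Qed.

Lemma structc_diagE (k p q : 'I_7) :
  structc (diag_mx a) (diag_mx b) (diag_mx c) k p q = ieval diag_val (sstructc k p q).
Proof.
rewrite /structc /sstructc !admat_diag !nidx_n_index.
case ap: (ad_index p) => [m|]; case aq: (ad_index q) => [m'|];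
  case np: (n_index p) => [j'|]; case nq: (n_index q) => [j|]; case nk: (n_index k) => [i|] /=;
  rewrite ?ieval_nil //.
all: rewrite ?(diag_mx_entry (ad_index_lt ap) (n_index_lt nk) (n_index_lt nq)) //.
all: rewrite (diag_mx_entry (ad_index_lt aq) (n_index_lt nk) (n_index_lt np)).
all: by case: eqP; rewrite ?ievalN ?ieval_nil ?oppr0.
Qed.

Lemma ieval_slambda n : (n < 4)%N ->
  ieval diag_val (slambda n) = (a 0 (inord 0) + a 0 (inord n)) ^+ 2
    + (b 0 (inord 0) + b 0 (inord n)) ^+ 2 + (c 0 (inord 0) + c 0 (inord n)) ^+ 2.
Proof. by move=> lt_n4; rewrite /slambda !(ievalD, ievalM) !ieval_sdiag_entry. Qed.

End DiagonalValuation.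

(** * The G2-structure *)

Definition sform_w2 (i j : nat) := sform_wedge (sform_basis i) (sform_basis j).
Definition sform_w3 (i j k : nat) := sform_wedge (sform_basis i) (sform_w2 j k).

Definition sG2phi : sform :=
  sform_sub (sform_sub (sform_sub (sform_add (sform_add (sform_add
    (sform_w3 1 2 7) (sform_w3 3 4 7)) (sform_w3 5 6 7)) (sform_w3 1 3 5))
    (sform_w3 1 4 6)) (sform_w3 2 3 6)) (sform_w3 2 4 5).
Definition sG2psi : sform := sform_hodge sG2phi.

Definition somega7 := sform_add (sform_w2 3 4) (sform_w2 5 6).
Definition somega1 := sform_sub (sform_w2 3 5) (sform_w2 4 6).
Definition somega2 := sform_sub (sform_opp (sform_w2 3 6)) (sform_w2 4 5).

Definition sphi_rhs (p7 p1 p2 : ipoly) :=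
  sform_add (sform_add (sform_scale p7 (sform_wedge somega7 (sform_basis 7)))
    (sform_scale p1 (sform_wedge somega1 (sform_basis 1))))
    (sform_scale p2 (sform_wedge somega2 (sform_basis 2))).

Definition spsi_rhs (p7 p1 p2 : ipoly) :=
  sform_sub (sform_add (sform_scale p7 (sform_wedge somega7 (sform_w2 1 2)))
    (sform_scale p1 (sform_wedge somega1 (sform_w2 2 7))))
    (sform_scale p2 (sform_wedge somega2 (sform_w2 1 7))).

Lemma sform_laplacian_G2phi :
  sform_eqb (sform_laplacian sstructc sG2phi) (sphi_rhs (slambda 1) (slambda 2) (slambda 3)).
Proof. by vm_compute. Qed.

Lemma sform_laplacian_G2psi :
  sform_eqb (sform_laplacian sstructc sG2psi) (spsi_rhs (slambda 1) (slambda 2) (slambda 3)).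
Proof. by vm_compute. Qed.

Section G2Forms.
Variables (R : realFieldType) (x : nat -> R).
Local Notation represents := (represents x).

Lemma represents_w2 i j : (0 < i <= 7)%N -> (0 < j <= 7)%N -> represents (sform_w2 i j) (w2 R i j).
Proof. by move=> i7 j7; apply: represents_wedge; apply: represents_basis. Qed.

Lemma represents_w3 i j k : (0 < i <= 7)%N -> (0 < j <= 7)%N -> (0 < k <= 7)%N ->
  represents (sform_w3 i j k) (w3 R i j k).
Proof.
by move=> i7 j7 k7; apply: represents_wedge; [apply: represents_basis | apply: represents_w2].
Qed.

Lemma represents_G2phi : represents sG2phi (G2phi R).
Proof. by repeat first [apply: represents_sub | apply: represents_add | apply: represents_w3]. Qed.

Lemma represents_G2psi : represents sG2psi (G2psi R).
Proof. exact/represents_hodge/represents_G2phi. Qed.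

Lemma represents_omega7 : represents somega7 (omega7 R).
Proof. by apply: represents_add; apply: represents_w2. Qed.

Lemma represents_omega1 : represents somega1 (omega1 R).
Proof. by apply: represents_sub; apply: represents_w2. Qed.

Lemma represents_omega2 : represents somega2 (omega2 R).
Proof. by apply: represents_sub; [apply: represents_opp|]; apply: represents_w2. Qed.

Lemma represents_phi_rhs p7 p1 p2 l7 l1 l2 :
  l7 = ieval x p7 -> l1 = ieval x p1 -> l2 = ieval x p2 ->
  represents (sphi_rhs p7 p1 p2)
    (fscale l7 (wedge (omega7 R) (eb R 7)) + fscale l1 (wedge (omega1 R) (eb R 1))
     + fscale l2 (wedge (omega2 R) (eb R 2))).
Proof.
move=> l7E l1E l2E; apply: represents_add; first apply: represents_add.
- by apply: (represents_scale_wedge l7E represents_omega7); apply: represents_basis.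
- by apply: (represents_scale_wedge l1E represents_omega1); apply: represents_basis.
- by apply: (represents_scale_wedge l2E represents_omega2); apply: represents_basis.
Qed.

Lemma represents_psi_rhs p7 p1 p2 l7 l1 l2 :
  l7 = ieval x p7 -> l1 = ieval x p1 -> l2 = ieval x p2 ->
  represents (spsi_rhs p7 p1 p2)
    (fscale l7 (wedge (omega7 R) (w2 R 1 2)) + fscale l1 (wedge (omega1 R) (w2 R 2 7))
     - fscale l2 (wedge (omega2 R) (w2 R 1 7))).
Proof.
move=> l7E l1E l2E; apply: represents_sub; first apply: represents_add.
- by apply: (represents_scale_wedge l7E represents_omega7); apply: represents_w2.
- by apply: (represents_scale_wedge l1E represents_omega1); apply: represents_w2.
- by apply: (represents_scale_wedge l2E represents_omega2); apply: represents_w2.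
Qed.

End G2Forms.

Unset Implicit Arguments.

Theorem corollary4p11 (R : realFieldType) (a b c : 'rV[R]_4) :
  \tr (diag_mx a) = 0 -> \tr (diag_mx b) = 0 -> \tr (diag_mx c) = 0 ->
  let str := structc (diag_mx a) (diag_mx b) (diag_mx c) in
  let a_ := fun n : nat => a 0 (inord n.-1) in
  let b_ := fun n : nat => b 0 (inord n.-1) in
  let c_ := fun n : nat => c 0 (inord n.-1) in
  let l7 := (a_ 1 + a_ 2) ^+ 2 + (b_ 1 + b_ 2) ^+ 2 + (c_ 1 + c_ 2) ^+ 2 in
  let l1 := (a_ 1 + a_ 3) ^+ 2 + (b_ 1 + b_ 3) ^+ 2 + (c_ 1 + c_ 3) ^+ 2 in
  let l2 := (a_ 1 + a_ 4) ^+ 2 + (b_ 1 + b_ 4) ^+ 2 + (c_ 1 + c_ 4) ^+ 2 in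
  laplacian str (G2phi R) =
    fscale l7 (wedge (omega7 R) (eb R 7)) + fscale l1 (wedge (omega1 R) (eb R 1))
    + fscale l2 (wedge (omega2 R) (eb R 2))
  /\
  laplacian str (G2psi R) =
    fscale l7 (wedge (omega7 R) (w2 R 1 2)) + fscale l1 (wedge (omega1 R) (w2 R 2 7))
    - fscale l2 (wedge (omega2 R) (w2 R 1 7)).
Proof.
move=> tra trb trc str a_ b_ c_ l7 l1 l2.
pose x := diag_val a b c.
have strE : forall k p q : 'I_7, str k p q = ieval x (sstructc k p q) := structc_diagE tra trb trc.
have l7E : l7 = ieval x (slambda 1) by rewrite ieval_slambda.
have l1E : l1 = ieval x (slambda 2) by rewrite ieval_slambda.
have l2E : l2 = ieval x (slambda 3) by rewrite ieval_slambda.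
split; apply: represents_eq.
- exact: sform_laplacian_G2phi.
- exact/(represents_laplacian strE)/represents_G2phi.
- exact: represents_phi_rhs l7E l1E l2E.
- exact: sform_laplacian_G2psi.
- exact/(represents_laplacian strE)/represents_G2psi.
- exact: represents_psi_rhs l7E l1E l2E.
Qed.
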